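(* With $X_i=Z_i(\alpha,v,w)$, $Y_i=Z_i(\beta,v,w')$ and the composition $X_i\odot Y_i$ defined recursively by \[X_i \odot Y_i = \begin{pmatrix} a_i & X_{i-1}\odot Y_{i-1} \\ -\overline{X_{i-1}\odot Y_{i-1}} & b_i q_{Y_i} +b'_iq_{X_i} -a_ib_ib'_i\end{pmatrix},\qquad X_1\odot Y_1=\begin{pmatrix} a_1 & \alpha\beta\\ -\overline{\alpha\beta} & b_1q_{Y_1}+b_1'q_{X_1}-a_1b_1b_1'\end{pmatrix},\] one has $q_{X_n \odot Y_n} = q_{X_n}\, q_{Y_n}$.
   Context: $R$ is a commutative ring and $(A,q)$ a composition algebra over $R$ with involution $\alpha\mapsto\overline{\alpha}$, $q(\alpha)=\alpha\overline{\alpha}$, $q(\alpha\beta)=q(\alpha)q(\beta)$. On $A\oplus H(R^n)$ the quadratic form is $q(\alpha,v,w)=\alpha\overline{\alpha}+v\cdot w^\intercal$. For $v=(a_1,\dots,a_n)$, $w=(b_1,\dots,b_n)$, set $Z_1(\alpha,v,w)=\begin{pmatrix} a_1&\alpha\\-\overline{\alpha}&b_1\end{pmatrix}$, $\overline{Z_1}=\begin{pmatrix} b_1&-\alpha\\\overline{\alpha}&a_1\end{pmatrix}$, and recursively $Z_i=\begin{pmatrix} a_i&Z_{i-1}\\-\overline{Z_{i-1}}&b_i\end{pmatrix}$, $\overline{Z_i}=\begin{pmatrix} b_i&-Z_{i-1}\\\overline{Z_{i-1}}&a_i\end{pmatrix}$; then $q(Z_i)=Z_i\overline{Z_i}=\alpha\overline{\alpha}+a_1b_1+\dots+a_ib_i$.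 Fix $v=(a_1,\dots,a_n)\in R^n$, let $\alpha,\beta\in A$, $w=(b_1,\dots,b_n)$, $w'=(b_1',\dots,b_n')$, and write $q_Z$ for $q(Z)$. *)

From HB Require Import structures.
From mathcomp Require Import all_boot all_algebra.
Set Implicit Arguments. Unset Strict Implicit. Unset Printing Implicit Defensive.
Import GRing.Theory.
Local Open Scope ring_scope.

(* The nested block "matrices" Z_i of the paper, represented by their data:
   ZBase a1 alpha b1  ==  Z_1 = [[a1, alpha], [-conj alpha, b1]]
   ZStep ai Z bi      ==  Z_i = [[ai, Z], [-conj Z, bi]]  with Z = Z_{i-1}. *)
Inductive zmat (R A : Type) :=
| ZBase of R & A & R
| ZStep of R & zmat R A & R.

Section ZDefs.
Variables (R : comRingType) (A : Type).
Variable mulA : A -> A -> A.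
Variable qA : A -> R.               (* its norm form q(alpha) = alpha * conj alpha *)

(* q(Z) = Z * conj Z = q(alpha) + a_1 b_1 + ... + a_i b_i *)
Fixpoint qZ (Z : zmat R A) : R :=
  match Z with
  | ZBase a x b => qA x + a * b
  | ZStep a Z' b => qZ Z' + a * b
  end.

(* Z_i(alpha, v, w), v = (a_1,...), w = (b_1,...), 1-based indexing (i >= 1). *)
Fixpoint Zm (x : A) (a b : nat -> R) (i : nat) : zmat R A :=
  match i with
  | 0 | 1 => ZBase (a 1%N) x (b 1%N)
  | S j => ZStep (a i) (Zm x a b j) (b i)
  end.

Fixpoint odot (x y : A) (a b b' : nat -> R) (i : nat) : zmat R A :=
  match i with
  | 0 | 1 => ZBase (a 1%N) (mulA x y)
       (b 1%N * qZ (Zm y a b' 1) + b' 1%N * qZ (Zm x a b 1) - a 1%N * b 1%N * b' 1%N)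
  | S j => ZStep (a i) (odot x y a b b' j)
       (b i * qZ (Zm y a b' i) + b' i * qZ (Zm x a b i) - a i * b i * b' i)
  end.
End ZDefs.

From HB Require Import structures.
From mathcomp Require Import all_boot all_algebra.
From mathcomp Require Import ring.
Import GRing.Theory.
Local Open Scope ring_scope.

(* Each level adds a hyperbolic plane: q(Z_i) = q(Z_{i-1}) + a_i b_i.  The
   entry b_i q(Y_i) + b'_i q(X_i) - a_i b_i b'_i is chosen so that the
   hyperbolic term of X_i (.) Y_i absorbs exactly the cross terms of
   (q(X_{i-1}) + a_i b_i)(q(Y_{i-1}) + a_i b'_i), leaving q(X_{i-1}) q(Y_{i-1});
   induction then reduces everything to q(alpha beta) = q(alpha) q(beta). *)

Lemma mulr_hyperbolic_step (R : comRingType) (x y a b b' : R) :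
  (x + a * b) * (y + a * b')
  = x * y + a * (b * (y + a * b') + b' * (x + a * b) - a * b * b').
Proof. ring. Qed.

Section OdotNorm.
Variables (R : comRingType) (A : Type) (mulA : A -> A -> A) (qA : A -> R).
Hypothesis qA_mul : forall x y, qA (mulA x y) = qA x * qA y.
Variables (x y : A) (a b b' : nat -> R).

Lemma qZ_odot (i : nat) :
  qZ qA (odot mulA qA x y a b b' i.+1)
  = qZ qA (Zm x a b i.+1) * qZ qA (Zm y a b' i.+1).
Proof.
elim: i => [|i IH] /=; rewrite mulr_hyperbolic_step.
  by rewrite qA_mul.
by move: IH => /= ->.
Qed.

End OdotNorm.

Theorem mainTheorem10 (R : comRingType) (A : Type)
    (mulA : A -> A -> A) (conjA : A -> A) (embR : R -> A) (qA : A -> R)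
    (conjK : forall x, conjA (conjA x) = x)
    (conj_mul : forall x y, conjA (mulA x y) = mulA (conjA y) (conjA x))
    (qA_def : forall x, mulA x (conjA x) = embR (qA x))
    (qA_mul : forall x y, qA (mulA x y) = qA x * qA y)
    (n : nat) (n_ge1 : (1 <= n)%N)
    (alpha beta : A) (a b b' : nat -> R) :
  qZ qA (odot mulA qA alpha beta a b b' n)
  = qZ qA (Zm alpha a b n) * qZ qA (Zm beta a b' n).
Proof.
case: n n_ge1 => [//|n] _.
exact: qZ_odot.
Qed.
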